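(* Let $\mathfrak{X}=(X,\{R_i\}_{i=0}^{4})$ be a commutative association scheme with $R_3^\top=R_4$ and $R_i^\top=R_i$ for $0\le i\le 2$, with primitive idempotents $E_0,E_1,E_2,E_3,E_4$. Let its symmetrization $\tilde{\mathfrak X}=(X,\{R_0,R_1,R_2,R_3\cup R_4\})$ be amorphic, with primitive idempotents $\tilde E_0,\dots,\tilde E_3$ numbered so that, writing $\tilde A_i$ for the adjacency matrix of the $i$-th relation of $\tilde{\mathfrak X}$ and $k_i$ for its valency, $\tilde A_i\tilde E_0=k_i\tilde E_0$, $\tilde A_i\tilde E_i=b_i\tilde E_i$, $\tilde A_i\tilde E_j=a_i\tilde E_j$ for $1\le j\le 3$, $j\ne i$, with $a_i\ne b_i$. If $\tilde{E}_3\notin\{E_1,E_2,E_3,E_4\}$, then the digraph $(X,R_i\cup R_3)$ has $5$ distinct eigenvalues for each $i\in\{1,2\}$.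
   Context: Association scheme: finite set $X$ with a partition of $X\times X$ into relations $R_0$ (diagonal), $R_1,\dots$, closed under transposition, with constant intersection numbers; commutative if these are symmetric in the lower indices. Adjacency matrices are the $01$-matrices of the relations; primitive idempotents $E_0=J/|X|,\dots$ of the Bose–Mesner algebra satisfy $A_iE_j\in\mathbb C E_j$. A symmetric scheme is amorphic if merging the nondiagonal relations along any partition of their index set into nonempty parts gives an association scheme. Eigenvalues of a digraph $(X,R)$ are those of its $01$ adjacency matrix. *)

From mathcomp Require Import all_boot all_order all_algebra all_field.
Set Implicit Arguments. Unset Strict Implicit. Unset Printing Implicit Defensive.
Import GRing.Theory Num.Theory.
Local Open Scope ring_scope.

(* A configuration on the point set X = 'I_n is given by a "class function"
   c : X -> X -> I; the relations are the nonempty fibres of c. *)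

Definition isect_num (n : nat) (I : finType) (c : 'I_n -> 'I_n -> I)
  (i j : I) (x y : 'I_n) : nat :=
  #|[set z | (c x z == i) && (c z y == j)]|.

Definition is_assoc_scheme (n : nat) (I : finType) (c : 'I_n -> 'I_n -> I) : Prop :=
  [/\ exists i0, forall x y, (c x y == i0) = (x == y),
      forall i, exists j, forall x y, c x y = i -> c y x = j
    & forall i j k, exists p : nat, forall x y, c x y = k -> isect_num c i j x y = p].

Definition is_commutative (n : nat) (I : finType) (c : 'I_n -> 'I_n -> I) : Prop :=
  forall i j x y, isect_num c i j x y = isect_num c j i x y.

Definition is_symmetric (n : nat) (I : finType) (c : 'I_n -> 'I_n -> I) : Prop :=
  forall x y, c x y = c y x.

(* amorphic symmetric scheme with diagonal relation indexed by 0: every merging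
   of the nondiagonal relations (given by a relabelling g fixing 0 and sending
   nonzero labels to nonzero labels, i.e. any partition of {1..d} into nonempty
   parts) is again an association scheme *)
Definition amorphic (n d : nat) (c : 'I_n -> 'I_n -> 'I_d.+1) : Prop :=
  [/\ is_assoc_scheme c, is_symmetric c,
      (forall x y, (c x y == ord0) = (x == y))
    & forall g : 'I_d.+1 -> 'I_d.+1, g ord0 = ord0 ->
        (forall i, i != ord0 -> g i != ord0) ->
        is_assoc_scheme (fun x y => g (c x y))].

Definition adjmx (n : nat) (P : 'I_n -> 'I_n -> bool) : 'M[algC]_n :=
  \matrix_(x, y) (P x y)%:R.

Definition rel_mx (n : nat) (I : finType) (c : 'I_n -> 'I_n -> I) (i : I) : 'M[algC]_n :=
  adjmx (fun x y => c x y == i).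

Definition in_BM (n : nat) (I : finType) (c : 'I_n -> 'I_n -> I) (M : 'M[algC]_n) : Prop :=
  exists w : I -> algC, M = \sum_i w i *: rel_mx c i.

Definition prim_idem (n : nat) (I : finType) (c : 'I_n -> 'I_n -> I) (E : 'M[algC]_n) : Prop :=
  [/\ in_BM c E, E *m E = E, E != 0
    & forall F, in_BM c F -> F *m F = F -> F *m E = F -> F = 0 \/ F = E].

Definition symz (n : nat) (c : 'I_n -> 'I_n -> 'I_5) : 'I_n -> 'I_n -> 'I_4 :=
  fun x y => if (nat_of_ord (c x y) == 4)%N then inord 3 else inord (c x y).

(* Every primitive idempotent E_l of the scheme lies under exactly one
   primitive idempotent Et (tau l) of the symmetrization.  With five E's, four
   Et's and Et_3 not among the E's, the fibres of tau over 0, i, 3 - i are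
   single idempotents, which are therefore real symmetric, and Et_3 = E_p + E_q.
   On a symmetric E_l the relations R_3 and R_4 = R_3^T act by the same real
   number; on E_p and E_q the eigenvalue of A_3 is non-real (otherwise the skew
   matrix A_3 - A_4 would be a multiple of one idempotent) and differs between
   p and q (otherwise E_p = E_q).  Hence A_i + A_3 has two distinct non-real
   eigenvalues and three real ones, theta_i(j) + theta_3(j) / 2 for
   j = 0, i, 3 - i.  These are distinct since a_i <> b_i and since, by the
   valency bounds theta_r <= k_r, a coincidence with j = 0 would force
   a_3 = k_3 and theta_i(j) = k_i, which the trace identities
   tr At_i = tr (At_i At_3) = 0 exclude. *)

From mathcomp Require Import all_boot all_order all_algebra all_field.
From mathcomp Require Import sesquilinear spectral ring zify.
From Stdlib Require Import Classical.
Set Implicit Arguments. Unset Strict Implicit. Unset Printing Implicit Defensive.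
Import Order.TTheory GRing.Theory Num.Theory.
Local Open Scope ring_scope.
Local Open Scope sesquilinear_scope.

Section ConjugateTranspose.
Variable C : numClosedFieldType.

Lemma trmxC_mul m n p (A : 'M[C]_(m, n)) (B : 'M[C]_(n, p)) :
  (A *m B) ^t* = B ^t* *m A ^t*.
Proof. by rewrite trmx_mul map_mxM. Qed.

Lemma trmxCZ m n a (A : 'M[C]_(m, n)) : (a *: A) ^t* = a^* *: A ^t*.
Proof. by apply/matrixP=> i j; rewrite !mxE rmorphM. Qed.

Lemma trmxC_inj m n : injective (fun A : 'M[C]_(m, n) => A ^t*).
Proof. by move=> A B /(congr1 (fun M => M ^t*)); rewrite !trmxCK. Qed.

Lemma trmxC0 m n : (0 : 'M[C]_(m, n)) ^t* = 0.
Proof. by apply/matrixP => i j; rewrite !mxE rmorph0. Qed.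

Lemma mxtrace_mul_trmxC n (A : 'M[C]_n) :
  \tr (A *m A ^t*) = \sum_i \sum_j `|A i j| ^+ 2.
Proof.
by apply: eq_bigr => i _; rewrite mxE; apply: eq_bigr => j _; rewrite !mxE normCK.
Qed.

Lemma mxtrace_mul_trmxC_gt0 n (A : 'M[C]_n) : A != 0 -> 0 < \tr (A *m A ^t*).
Proof.
move=> nzA; have ge0 i j : 0 <= `|A i j| ^+ 2 by rewrite exprn_ge0.
rewrite mxtrace_mul_trmxC lt_def sumr_ge0 ?andbT => [|i _]; last exact: sumr_ge0.
apply: contra nzA => /eqP sum0; apply/eqP/matrixP => i j; rewrite mxE.
have /psumr_eq0P/(_ j isT) : \sum_j `|A i j| ^+ 2 = 0.
  by apply: (psumr_eq0P _ sum0) => // i' _; exact: sumr_ge0.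
by move=> /(_ (fun j _ => ge0 i j)) /eqP; rewrite sqrf_eq0 normr_eq0 => /eqP.
Qed.

Lemma mul_trmxC_eq0 n (A : 'M[C]_n) : A *m A ^t* = 0 -> A = 0.
Proof.
move=> AA0; apply/eqP/negPn/negP => /mxtrace_mul_trmxC_gt0.
by rewrite AA0 mxtrace0 ltxx.
Qed.

End ConjugateTranspose.

Lemma scaler_inj_vec (F : fieldType) (V : lmodType F) (v : V) :
  v != 0 -> injective ( *:%R^~ v).
Proof.
move=> nzv a b /eqP; rewrite -subr_eq0 -scalerBl scaler_eq0 (negbTE nzv) orbF.
by rewrite subr_eq0 => /eqP.
Qed.

Section BoseMesner.
Variables (n : nat) (I : finType) (c : 'I_n -> 'I_n -> I).
Local Notation BM := (in_BM c).

Lemma rel_mxE r x y : rel_mx c r x y = (c x y == r)%:R.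
Proof. by rewrite mxE. Qed.

Lemma in_BM_cfun (f : I -> algC) : BM (\matrix_(x, y) f (c x y)).
Proof.
exists f; apply/matrixP => x y; rewrite !mxE summxE (bigD1 (c x y)) //= big1 => [|r].
  by rewrite !mxE eqxx mulr1 addr0.
by rewrite !mxE eq_sym => /negbTE ->; rewrite mulr0.
Qed.

Lemma in_BM0 : BM 0.
Proof. by exists (fun=> 0); rewrite big1 // => r _; rewrite scale0r. Qed.

Lemma in_BM_rel r : BM (rel_mx c r).
Proof. exact: (in_BM_cfun (fun s => (s == r)%:R)). Qed.

Lemma in_BMD M N : BM M -> BM N -> BM (M + N).
Proof.
move=> [w ->] [v ->]; exists (fun r => w r + v r).
by rewrite -big_split; apply: eq_bigr => r _; rewrite scalerDl.
Qed.

Lemma in_BMZ a M : BM M -> BM (a *: M).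
Proof.
move=> [w ->]; exists (fun r => a * w r).
by rewrite scaler_sumr; apply: eq_bigr => r _; rewrite scalerA.
Qed.

Lemma in_BM_sum (J : finType) (P : pred J) (F : J -> 'M_n) :
  (forall j, P j -> BM (F j)) -> BM (\sum_(j | P j) F j).
Proof.
by move=> BF; apply: big_ind => //; [exact: in_BM0 | exact: in_BMD].
Qed.

Lemma in_BMB M N : BM M -> BM N -> BM (M - N).
Proof. by move=> BM_M BM_N; rewrite -scaleN1r; apply/in_BMD/in_BMZ. Qed.

Lemma sum_rel_mx : \sum_r rel_mx c r = const_mx 1.
Proof.
apply/matrixP => x y; rewrite summxE (bigD1 (c x y)) //= big1 => [|r].
  by rewrite !mxE eqxx addr0.
by rewrite mxE eq_sym => /negbTE ->.
Qed.

Lemma mul_rel_mxE r s x y :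
  (rel_mx c r *m rel_mx c s) x y = (isect_num c r s x y)%:R.
Proof.
rewrite mxE /isect_num -sum1_card natr_sum [RHS]big_mkcond /=.
by apply: eq_bigr => z _; rewrite !mxE inE -natrM mulnb; case: (_ && _).
Qed.

Lemma rel_mx_comm : is_commutative c ->
  forall r s, rel_mx c r *m rel_mx c s = rel_mx c s *m rel_mx c r.
Proof. by move=> cC r s; apply/matrixP => x y; rewrite !mul_rel_mxE cC. Qed.

Lemma in_BM_comm : is_commutative c ->
  forall M N, BM M -> BM N -> M *m N = N *m M.
Proof.
move=> cC M N [w ->] [v ->]; rewrite !mulmx_suml; under eq_bigr do rewrite mulmx_sumr.
under [RHS]eq_bigr do rewrite mulmx_sumr.
rewrite exchange_big /=; apply: eq_bigr => r _; apply: eq_bigr => s _.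
by rewrite -!scalemxAl -!scalemxAr rel_mx_comm // !scalerA mulrC.
Qed.

Lemma mxtrace_rel_mx r0 r : (forall x, c x x = r0) -> r != r0 -> \tr (rel_mx c r) = 0.
Proof.
by move=> diag_r0 rr0; apply: big1 => x _; rewrite rel_mxE diag_r0 eq_sym (negbTE rr0).
Qed.

Lemma mxtrace_rel_mx_mul r s : is_symmetric c -> r != s ->
  \tr (rel_mx c r *m rel_mx c s) = 0.
Proof.
move=> c_sym rs; apply: big1 => x _; rewrite mxE big1 // => z _.
by rewrite !rel_mxE (c_sym z x); case: eqP => [->|]; rewrite ?(negbTE rs) ?mulr0 ?mul0r.
Qed.

Lemma in_BM_trmx_sym M : is_symmetric c -> BM M -> M^T = M.
Proof.
move=> c_sym [w ->]; rewrite raddf_sum; apply: eq_bigr => r _.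
by apply/matrixP => x y; rewrite !mxE c_sym.
Qed.

Lemma rel_mx_trmxC r : (rel_mx c r) ^t* = (rel_mx c r)^T.
Proof. by apply/matrixP => x y; rewrite !mxE rmorph_nat. Qed.

Section Scheme.
Hypothesis c_scheme : is_assoc_scheme c.

Lemma in_BM1 : BM 1%:M.
Proof.
have [[r0 diag_r0] _ _] := c_scheme.
have -> : 1%:M = \matrix_(x, y) (c x y == r0)%:R :> 'M[algC]_n.
  by apply/matrixP => x y; rewrite !mxE diag_r0.
exact: (in_BM_cfun (fun s => (s == r0)%:R)).
Qed.

Lemma in_BMM M N : BM M -> BM N -> BM (M *m N).
Proof.
have [_ _ isect] := c_scheme.
have BMrel r s : BM (rel_mx c r *m rel_mx c s).
  have [p Pp] := fin_all_exists (isect r s).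
  have -> : rel_mx c r *m rel_mx c s = \matrix_(x, y) (p (c x y))%:R.
    by apply/matrixP => x y; rewrite mul_rel_mxE mxE (Pp (c x y) x y).
  exact: (in_BM_cfun (fun t => (p t)%:R)).
move=> [w ->] [v ->]; rewrite mulmx_suml; apply: in_BM_sum => r _.
rewrite mulmx_sumr; apply: in_BM_sum => s _.
by rewrite -scalemxAl -scalemxAr; apply/in_BMZ/in_BMZ/BMrel.
Qed.

Lemma in_BM_trmxC M : BM M -> BM (M ^t*).
Proof.
have [_ transp _] := c_scheme; have [t Pt] := fin_all_exists transp.
move=> [w ->]; rewrite !raddf_sum /=; apply: in_BM_sum => r _.
have -> : ((w r *: rel_mx c r) ^t*) = (w r)^* *: \matrix_(x, y) (t (c x y) == r)%:R.
  by apply/matrixP => x y; rewrite !mxE -(Pt (c x y) x y) // rmorphM /= rmorph_nat.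
exact: (in_BMZ _ (in_BM_cfun (fun s => (t s == r)%:R))).
Qed.

End Scheme.
End BoseMesner.

Definition idem_eigenvalue (F : fieldType) n (B E : 'M[F]_n) : F := \tr (B *m E) / \tr E.

Lemma idem_eigenvalue_eq (F : fieldType) n (B E : 'M[F]_n) a :
  \tr E != 0 -> B *m E = a *: E -> idem_eigenvalue B E = a.
Proof. by move=> trE0 BE; rewrite /idem_eigenvalue BE mxtraceZ mulfK. Qed.

Section PrimitiveIdempotents.
Variables (n' : nat) (I : finType) (c : 'I_n'.+1 -> 'I_n'.+1 -> I).
Local Notation n := n'.+1.
Local Notation BM := (in_BM c).
Hypotheses (c_scheme : is_assoc_scheme c)
  (BM_comm : forall M N, BM M -> BM N -> M *m N = N *m M).

Let BM1 := in_BM1 c_scheme.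
Let BMM := in_BMM c_scheme.
Let BMC := in_BM_trmxC c_scheme.

Let horner_mxM (N : 'M[algC]_n) p q :
  horner_mx N (p * q) = horner_mx N p *m horner_mx N q.
Proof. exact: rmorphM. Qed.

Lemma in_BMX K m : BM K -> BM (K ^+ m).
Proof. by move=> BK; elim: m => [|m IH]; rewrite ?expr0 // exprS; apply: BMM. Qed.

Lemma in_BM_horner N p : BM N -> BM (horner_mx N p).
Proof.
move=> BN; elim/poly_ind: p => [|p a IH]; first by rewrite rmorph0; exact: in_BM0.
rewrite rmorphD rmorphM /= horner_mx_X horner_mx_C -mulmxE -scalemx1.
exact/in_BMD/in_BMZ/BM1/BMM.
Qed.

Lemma in_BM_sqr_eq0 L : BM L -> L *m L = 0 -> L = 0.
Proof.
(* H = L L^* is hermitian and, L commuting with L^*, H H = L L L^* L^* = 0. *)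
move=> BL LL0; do 2 apply: mul_trmxC_eq0; set H := L *m L ^t*.
have -> : H ^t* = H by rewrite trmxC_mul trmxCK.
by rewrite mulmxA -(mulmxA L) (BM_comm (BMC BL) BL) !mulmxA LL0 !mul0mx.
Qed.

Lemma in_BM_nilpotent_eq0 K m : BM K -> K ^+ m.+1 = 0 -> K = 0.
Proof.
move=> BK; elim: m => [|m IH] Km; first by rewrite -[K]expr1.
apply/IH/in_BM_sqr_eq0; first exact: in_BMX.
by rewrite mulmxE -exprD addSnnS addnC exprD Km mul0r.
Qed.

Lemma idem_mul_prim F E : BM F -> F *m F = F -> prim_idem c E ->
  F *m E = 0 \/ F *m E = E.
Proof.
move=> BF FF [BE EE _ minE]; apply: minE; first exact: BMM.
  by rewrite mulmxA -(mulmxA F) -(BM_comm BF BE) !mulmxA FF -mulmxA EE.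
by rewrite -mulmxA EE.
Qed.

Lemma prim_idem_orth E F : prim_idem c E -> prim_idem c F -> E != F -> E *m F = 0.
Proof.
move=> pE pF; have [BE EE _ _] := pE; have [BF FF _ _] := pF.
case: (idem_mul_prim BE EE pF) => // EF; case: (idem_mul_prim BF FF pE) => FE.
  by rewrite BM_comm.
by rewrite -EF BM_comm // FE eqxx.
Qed.

Lemma prim_idem_coprime_factor E N p q : prim_idem c E -> BM N -> coprimep p q ->
  horner_mx N (p * q) *m E = 0 ->
  horner_mx N p *m E = 0 \/ horner_mx N q *m E = 0.
Proof.
move=> pE BN /Bezout_eq1_coprimepP [[u v] /= uv1] pqE.
have [BE EE _ minE] := pE; have BP r := in_BM_horner r BN.
set F := horner_mx N (u * p); set G := horner_mx N (v * q).
have FG1 : F + G = 1%:M by rewrite -rmorphD /= uv1 rmorph1.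
have kill r : horner_mx N (r * (p * q)) *m E = 0.
  by rewrite horner_mxM -mulmxA pqE mulmx0.
have FF : F *m F = F - F *m G by rewrite -{3}[F]mulmx1 -FG1 mulmxDr addrK.
have FGE : F *m G *m E = 0.
  by rewrite -horner_mxM -(kill (u * v)); congr (horner_mx N _ *m E); ring.
have FEidem : F *m E *m (F *m E) = F *m E.
  rewrite mulmxA -(mulmxA F) -(BM_comm (BP _) BE) !mulmxA FF -mulmxA EE.
  by rewrite mulmxBl FGE subr0.
case: (minE _ (BMM (BP _) BE) FEidem); first by rewrite -mulmxA EE.
  move=> FE; left; rewrite -[E]mul1mx -FG1 mulmxDl FE add0r mulmxA.
  by rewrite -horner_mxM -(kill v); congr (horner_mx N _ *m E); ring.
move=> FE; right; rewrite -FE mulmxA -horner_mxM -(kill u).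
by congr (horner_mx N _ *m E); ring.
Qed.

Lemma prim_idem_root_power E N r : prim_idem c E -> BM N -> r \is monic ->
  horner_mx N r *m E = 0 -> exists a m, horner_mx N (('X - a%:P) ^+ m) *m E = 0.
Proof.
move=> pE BN; have [_ _ nzE _] := pE; have [s] := ubnP (size r).
elim: s r => // s IH r szr monr rE.
have r_nonconst : size r != 1%N.
  apply: contraNneq nzE => r1; move: rE; rewrite (size1_polyC (eq_leq r1)).
  move: monr; rewrite monicE /lead_coef r1 => /eqP ->.
  by rewrite horner_mx_C mul1mx => ->; rewrite eqxx.
have [a ra] := closed_rootP r r_nonconst.
have [m [q qa Dr]] := multiplicity_XsubC r a; rewrite (monic_neq0 monr) /= in qa.
have cop : coprimep q (('X - a%:P) ^+ m).
  by apply: coprimep_expr; rewrite coprimep_XsubC.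
case: (prim_idem_coprime_factor pE BN cop) => [|qE|]; [by rewrite -Dr | | by exists a, m].
have m_gt0 : (0 < m)%N.
  by case: m {cop} Dr => // Dr; move: ra; rewrite Dr expr0 mulr1 (negbTE qa).
have monXm : ('X - a%:P) ^+ m \is monic by apply/monic_exp/monicXsubC.
apply: (IH q) => //; last by rewrite Dr monicMr in monr.
rewrite Dr size_Mmonic ?size_exp_XsubC // in szr; last first.
  by apply: contraNneq qa => ->; rewrite root0.
by move: szr; rewrite addnS /=; lia.
Qed.

Lemma prim_idem_eigen E B : prim_idem c E -> BM B -> exists a, B *m E = a *: E.
Proof.
move=> pE BB; have [BE EE _ _] := pE.
have [|a [m]] := prim_idem_root_power pE BB (char_poly_monic B).
  by rewrite Cayley_Hamilton mul0mx.
rewrite rmorphXn rmorphB /= horner_mx_X horner_mx_C => BaE.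
exists a; apply/eqP; rewrite -subr_eq0 -mul_scalar_mx -mulmxBl; apply/eqP.
have BaBM : BM (B - a%:M) by rewrite -scalemx1; exact/in_BMB/in_BMZ/BM1.
apply: (in_BM_nilpotent_eq0 (m := m)); first exact: BMM.
rewrite mulmxE exprMn_comm; last by rewrite /GRing.comm -!mulmxE BM_comm.
have -> : E ^+ m.+1 = E by elim: m {BaE} => // m IH; rewrite exprS IH -mulmxE.
by rewrite exprS -mulrA -mulmxE BaE mulmx0.
Qed.

Lemma prim_idem_trmxC_prim E : prim_idem c E -> prim_idem c (E ^t*).
Proof.
move=> [BE EE nzE minE]; split; first exact: BMC.
- by rewrite -trmxC_mul EE.
- by apply: contraNneq nzE => Et0; apply/eqP/trmxC_inj; rewrite Et0 trmxC0.
move=> F BF FF FE.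
have : F ^t* = 0 \/ F ^t* = E.
  apply: minE; [exact: BMC | by rewrite -trmxC_mul FF |].
  by rewrite (BM_comm (BMC BF) BE) -[E]trmxCK -trmxC_mul FE.
by case=> Ft; [left | right]; apply: trmxC_inj; rewrite /= Ft ?trmxC0 ?trmxCK.
Qed.

Lemma prim_idem_trmxC E : prim_idem c E -> E ^t* = E.
Proof.
move=> pE; have [_ _ nzE _] := pE; apply/eqP/negPn/negP => Et_neq.
have EEt : E *m E ^t* = 0 by rewrite prim_idem_orth 1?eq_sym //; exact: prim_idem_trmxC_prim.
by move: (mxtrace_mul_trmxC_gt0 nzE); rewrite EEt mxtrace0 ltxx.
Qed.

Lemma prim_idem_mxtrace_gt0 E : prim_idem c E -> 0 < \tr E.
Proof.
move=> pE; have [_ EE nzE _] := pE.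
by rewrite -{1}EE -{2}(prim_idem_trmxC pE) mxtrace_mul_trmxC_gt0.
Qed.

Lemma prim_idem_eigenvalueE E B : prim_idem c E -> BM B ->
  B *m E = idem_eigenvalue B E *: E.
Proof.
move=> pE BB; have [a BE] := prim_idem_eigen pE BB.
by rewrite (idem_eigenvalue_eq _ BE) // gt_eqF // prim_idem_mxtrace_gt0.
Qed.

Lemma prim_idem_below F : BM F -> F *m F = F -> F != 0 ->
  exists2 E, prim_idem c E & E *m F = E.
Proof.
have [k] := ubnP (\rank F); elim: k F => // k IH F rkF BF FF nzF.
case: (classic (exists G, [/\ BM G, G *m G = G, G *m F = G, G != 0 & G != F])).
  move=> [G [BG GG GF nzG neGF]].
  have ltGF : (\rank G < \rank F)%N.
    have sGF : (G <= F)%MS by rewrite -GF submxMl.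
    rewrite (ltn_leqif (mxrank_leqif_eq sGF)); apply: contra neGF.
    case/andP => _ /submxP [D DF]; have FG : F *m G = F by rewrite DF -mulmxA GG.
    by apply/eqP; rewrite -[G]GF (BM_comm BG BF) FG.
  have [|E pE EG] := IH G _ BG GG nzG; first exact: leq_trans ltGF rkF.
  by exists E; rewrite // -EG -mulmxA GF.
move=> noG; exists F => //; split=> // G BG GG GF.
case: (eqVneq G 0) => [->|nzG]; [by left | right; apply/eqP/negPn/negP => neGF].
by apply: noG; exists G.
Qed.

Lemma sum_prim_idem (J : finType) (E : J -> 'M_n) : injective E ->
  (forall j, prim_idem c (E j)) -> (forall F, prim_idem c F -> exists j, F = E j) ->
  \sum_j E j = 1%:M.
Proof.
move=> injE pE allE; set S := \sum_j E j.
have ES j : E j *m S = E j.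
  rewrite mulmx_sumr (bigD1 j) //= big1 ?addr0 => [|k kj]; first by case: (pE j).
  by rewrite prim_idem_orth // (inj_eq injE) eq_sym.
have BS : BM S by apply: in_BM_sum => j _; case: (pE j).
have SS : S *m S = S by rewrite {1}/S mulmx_suml; apply: eq_bigr => j _.
apply/eqP; rewrite eq_sym -subr_eq0; apply/negPn/negP => nzF.
have [||E' pE' E'F] := prim_idem_below _ _ nzF.
- exact/in_BMB/BS/BM1.
- by rewrite mulmxBl mul1mx mulmxBr mulmx1 SS subrr subr0.
have [j Ej] := allE _ pE'; have [_ _ nzEj _] := pE j.
by move: nzEj; rewrite -Ej -E'F Ej mulmxBr mulmx1 ES subrr eqxx.
Qed.

Lemma prim_idem_eigenvalue_trmxC E B : prim_idem c E -> BM B ->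
  idem_eigenvalue (B ^t*) E = (idem_eigenvalue B E)^*.
Proof.
move=> pE BB; have [BE _ _ _] := pE.
apply: idem_eigenvalue_eq; first by rewrite gt_eqF ?prim_idem_mxtrace_gt0.
rewrite -(BM_comm BE (BMC BB)) -{1}(prim_idem_trmxC pE) -trmxC_mul.
by rewrite (prim_idem_eigenvalueE pE BB) trmxCZ prim_idem_trmxC.
Qed.

Lemma prim_idem_eigenvalue_real E B : prim_idem c E -> BM B -> B ^t* = B ->
  (idem_eigenvalue B E)^* = idem_eigenvalue B E.
Proof. by move=> pE BB BC; rewrite -prim_idem_eigenvalue_trmxC // BC. Qed.

Lemma prim_idem_eq_eigen E F : prim_idem c E -> prim_idem c F ->
  (forall r, idem_eigenvalue (rel_mx c r) E = idem_eigenvalue (rel_mx c r) F) ->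
  E = F.
Proof.
move=> pE pF eqEF; have [[w Ew] EE nzE _] := pE; have [_ _ nzF _] := pF.
pose theta r := idem_eigenvalue (rel_mx c r) E.
have EX (X : 'M_n) : (forall r, rel_mx c r *m X = theta r *: X) ->
    E *m X = (\sum_r w r * theta r) *: X.
  move=> AX; rewrite {1}Ew mulmx_suml scaler_suml.
  by apply: eq_bigr => r _; rewrite -scalemxAl AX scalerA.
have AE r : rel_mx c r *m E = theta r *: E by exact/prim_idem_eigenvalueE/in_BM_rel.
have AF r : rel_mx c r *m F = theta r *: F.
  by rewrite /theta eqEF; exact/prim_idem_eigenvalueE/in_BM_rel.
have s1 : \sum_r w r * theta r = 1.
  by apply: (scaler_inj_vec nzE); rewrite /= -(EX _ AE) EE scale1r.
case: (eqVneq E F) => // neEF.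
by move: nzF; rewrite -[F]scale1r -s1 -(EX _ AF) prim_idem_orth // eqxx.
Qed.

End PrimitiveIdempotents.

Section LinearAlgebra.
Variables (F : fieldType) (n : nat).
Implicit Types (B E M : 'M[F]_n).

Lemma eigenvalue_idem_decomp (J : finType) (E : J -> 'M[F]_n) (theta : J -> F) M :
  \sum_j E j = 1%:M -> (forall j, E j != 0) ->
  (forall j, M *m E j = theta j *: E j) -> (forall j, M *m E j = E j *m M) ->
  forall e, eigenvalue M e <-> exists j, e = theta j.
Proof.
move=> sumE nzE ME cME e; split=> [/eigenvalueP [v vM nzv] | [j ->]].
  have [j nzvE] : exists j, v *m E j != 0.
    apply/existsP; apply: contraNT nzv => /existsPn vE0.
    by rewrite -[v]mulmx1 -sumE mulmx_sumr big1 // => j _; exact/eqP/negPn/vE0.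
  exists j; apply: (scaler_inj_vec nzvE) => /=.
  by rewrite scalemxAl -vM -mulmxA ME -scalemxAr.
apply/eigenvalueP; have [r nzr] : exists r, row r (E j) != 0.
  apply/existsP; apply: contraNT (nzE j) => /existsPn Er0.
  by apply/eqP/row_matrixP => r; rewrite row0; exact/eqP/negPn/Er0.
by exists (row r (E j)); rewrite // -row_mul -cME ME; apply/rowP => x; rewrite !mxE.
Qed.

Lemma mxtrace_idem_decomp (J : finType) (E : J -> 'M[F]_n) (theta : J -> F) M :
  \sum_j E j = 1%:M -> (forall j, M *m E j = theta j *: E j) ->
  \tr M = \sum_j theta j * \tr (E j).
Proof.
move=> sumE ME; rewrite -[M]mulmx1 -sumE mulmx_sumr raddf_sum.
by apply: eq_bigr => j _; rewrite /= ME mxtraceZ.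
Qed.

Lemma trmx_eigen B E a : B *m E = a *: E -> E^T = E -> B^T *m E = E *m B^T ->
  B^T *m E = a *: E.
Proof. by move=> BE Esym cBE; rewrite cBE -{1}Esym -trmx_mul BE linearZ /= Esym. Qed.

End LinearAlgebra.

Lemma idem_trmxN_eq0 (R : numFieldType) n (E : 'M[R]_n) : E *m E = E -> E^T = - E -> E = 0.
Proof.
move=> EE ET; have : - E = E by rewrite -ET -{1}EE trmx_mul ET mulNmx mulmxN opprK EE.
move/eqP; rewrite eq_sym -subr_eq0 opprK -mulr2n -scaler_nat scaler_eq0 pnatr_eq0.
by move/eqP.
Qed.

Lemma norm_eigenvalue_le_valency n (P : 'I_n -> 'I_n -> bool) (k : nat) (X : 'M[algC]_n) a :
  (forall y, #|[set x | P x y]| = k) -> X != 0 -> adjmx P *m X = a *: X ->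
  `|a| <= k%:R.
Proof.
move=> degP nzX PX.
have [[x0 y0] /= nzX0] : exists xy : 'I_n * 'I_n, X xy.1 xy.2 != 0.
  apply/existsP; apply: contraNT nzX => /existsPn X0.
  by apply/eqP/matrixP => x y; rewrite mxE; exact/eqP/negPn/(X0 (x, y)).
pose S := \sum_x `|X x y0|.
have S_gt0 : 0 < S by rewrite /S (bigD1 x0) //= ltr_pwDl ?normr_gt0 ?sumr_ge0.
have colsum z : \sum_x (P x z)%:R = k%:R :> algC.
  rewrite -(degP z) -sum1_card natr_sum [RHS]big_mkcond /=.
  by apply: eq_bigr => x _; rewrite inE; case: (P x z).
rewrite -(ler_pM2r S_gt0) /S !mulr_sumr.
apply: (le_trans (y := \sum_x \sum_z (P x z)%:R * `|X z y0|)).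
  apply: ler_sum => x _; have := congr1 (fun M : 'M[algC]_n => M x y0) PX; rewrite !mxE => Pxy.
  rewrite -normrM -Pxy (le_trans (ler_norm_sum _ _ _)) //.
  by apply: ler_sum => z _; rewrite mxE normrM normr_nat.
by rewrite exchange_big /=; under eq_bigr do rewrite -mulr_suml colsum.
Qed.

Lemma injective_off_collision (A B : finType) (f : A -> B) (x1 x2 : A) :
  #|A| = #|B|.+1 -> (forall y, exists x, f x = y) -> x1 != x2 -> f x1 = f x2 ->
  {in predC1 x2 &, injective f}.
Proof.
move=> cardA surj x12 fx12; apply/imset_injP.
have -> : [set f x | x in predC1 x2] = setT.
  apply/setP => y; rewrite !inE; have [x <-] := surj y.
  case: (eqVneq x x2) => [->|xx2]; first by rewrite -fx12 imset_f // !inE.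
  by apply: imset_f; rewrite !inE.
by rewrite cardsT cardC1 cardA.
Qed.

Section Symmetrization.
Variables (n : nat) (c : 'I_n -> 'I_n -> 'I_5).

Lemma in_BM_symz M : in_BM (symz c) M -> in_BM c M.
Proof.
move=> [w ->]; apply: in_BM_sum => r _; apply: in_BMZ.
exact: (in_BM_cfun c (fun t : 'I_5 =>
  ((if (t == 4 :> nat) then inord 3 else inord t) == r)%:R)).
Qed.

Lemma rel_mx_symz_low (r : 'I_5) : (r <= 2)%N -> rel_mx (symz c) (inord r) = rel_mx c r.
Proof.
move=> r_le2; apply/matrixP => x y; rewrite !rel_mxE; congr ((nat_of_bool _)%:R).
rewrite /symz -!val_eqE /=; have := ltn_ord (c x y).
have [c4|c4] := eqVneq (nat_of_ord (c x y)) 4%N; rewrite ?c4 ?(negbTE c4) /= => c_lt5.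
  by rewrite !inordK; try lia; apply/idP/idP => /eqP; lia.
by rewrite !inordK; lia.
Qed.

Lemma rel_mx_symz3 :
  rel_mx (symz c) (inord 3) = rel_mx c (inord 3) + rel_mx c (inord 4).
Proof.
apply/matrixP => x y; rewrite !mxE /symz.
by case: (c x y) => [[|[|[|[|[|m]]]]] ?] //=; rewrite -!val_eqE /= ?inordK //= ?addr0 ?add0r.
Qed.

Lemma trmx_rel_mx3 :
  (forall x y, (nat_of_ord (c x y) == 3)%N = (nat_of_ord (c y x) == 4)%N) ->
  (rel_mx c (inord 3))^T = rel_mx c (inord 4).
Proof.
by move=> c_tr34; apply/matrixP => x y; rewrite !mxE -!val_eqE /= !inordK // c_tr34.
Qed.

End Symmetrization.

Section Proposition.
Variable n' : nat.
Local Notation n := n'.+1.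
Variables (c : 'I_n -> 'I_n -> 'I_5) (E : 'I_5 -> 'M[algC]_n) (Et : 'I_4 -> 'M[algC]_n).
Hypotheses (c_scheme : is_assoc_scheme c) (c_comm : is_commutative c)
  (c_nonempty : forall r, exists x y, c x y = r)
  (c_tr34 : forall x y, (nat_of_ord (c x y) == 3)%N = (nat_of_ord (c y x) == 4)%N).
Hypotheses (E_inj : injective E) (E_prim : forall l, prim_idem c (E l))
  (E_all : forall F, prim_idem c F -> exists l, F = E l)
  (E0_J : E ord0 = n%:R^-1 *: const_mx 1).
Hypotheses (symz_scheme : is_assoc_scheme (symz c)) (symz_sym : is_symmetric (symz c))
  (symz_diag : forall x y, (symz c x y == ord0) = (x == y)).
Hypotheses (Et_inj : injective Et) (Et_prim : forall j, prim_idem (symz c) (Et j))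
  (Et_all : forall F, prim_idem (symz c) F -> exists j, F = Et j).
Variables (k : 'I_4 -> nat) (a b : 'I_4 -> algC).
Hypothesis Et_eigen : forall r, r != ord0 ->
  [/\ forall x, #|[set y | symz c x y == r]| = k r,
      rel_mx (symz c) r *m Et ord0 = (k r)%:R *: Et ord0,
      rel_mx (symz c) r *m Et r = b r *: Et r,
      forall j, j != ord0 -> j != r -> rel_mx (symz c) r *m Et j = a r *: Et j
    & a r != b r].
Hypothesis Et3_split : forall l : 'I_5, l != ord0 -> Et (inord 3) != E l.

Local Notation A r := (rel_mx c r).
Local Notation At r := (rel_mx (symz c) r).
Local Notation P r l := (idem_eigenvalue (A r) (E l)).
Local Notation o3 := (inord 3 : 'I_5).
Local Notation o4 := (inord 4 : 'I_5).
Local Notation t3 := (inord 3 : 'I_4).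

Let BMC : forall M N, in_BM c M -> in_BM c N -> M *m N = N *m M := in_BM_comm c_comm.
Let BMCt M N (BM : in_BM (symz c) M) (BN : in_BM (symz c) N) : M *m N = N *m M :=
  BMC (in_BM_symz BM) (in_BM_symz BN).

Let E_neq0 l : E l != 0. Proof. by case: (E_prim l). Qed.
Let Et_neq0 j : Et j != 0. Proof. by case: (Et_prim j). Qed.
Let E_BM l : in_BM c (E l). Proof. by case: (E_prim l). Qed.
Let Et_BM j : in_BM c (Et j). Proof. by case: (Et_prim j) => /in_BM_symz. Qed.
Let Et_idem j : Et j *m Et j = Et j. Proof. by case: (Et_prim j). Qed.
Let sum_E : \sum_l E l = 1%:M := sum_prim_idem c_scheme BMC E_inj E_prim E_all.
Let sum_Et : \sum_j Et j = 1%:M := sum_prim_idem symz_scheme BMCt Et_inj Et_prim Et_all.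

Let t3_neq0 : t3 != ord0. Proof. by rewrite -val_eqE /= inordK. Qed.

Let E_tr_neq0 l : \tr (E l) != 0.
Proof. by rewrite gt_eqF // (prim_idem_mxtrace_gt0 c_scheme BMC (E_prim l)). Qed.

Lemma A_E r l : A r *m E l = P r l *: E l.
Proof. exact/(prim_idem_eigenvalueE c_scheme BMC (E_prim l))/in_BM_rel. Qed.

Definition theta (r j : 'I_4) : algC :=
  if r == ord0 then 1 else if j == ord0 then (k r)%:R else if j == r then b r else a r.

Lemma At_Et r j : At r *m Et j = theta r j *: Et j.
Proof.
rewrite /theta; case: eqP => [->|/eqP r0].
  have -> : At ord0 = 1%:M by apply/matrixP => x y; rewrite !mxE symz_diag.
  by rewrite mul1mx scale1r.
have [_ At0 Atr Atj _] := Et_eigen r0.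
by case: eqP => [->|/eqP j0] //; case: eqP => [->|/eqP jr] //; exact: Atj.
Qed.

Definition tau (l : 'I_5) : 'I_4 := odflt ord0 [pick j | Et j *m E l == E l].

Lemma Et_mul_E j l : Et j *m E l = if tau l == j then E l else 0.
Proof.
have cover : exists j, Et j *m E l == E l.
  apply/existsP; apply: contraNT (E_neq0 l) => /existsPn none.
  apply/eqP; rewrite -[E l]mul1mx -sum_Et mulmx_suml big1 // => j' _.
  case: (idem_mul_prim c_scheme BMC (Et_BM j') (Et_idem j') (E_prim l)) => // Ejl.
  by move: (none j'); rewrite Ejl eqxx.
have tauE : Et (tau l) *m E l = E l.
  by rewrite /tau; case: pickP => [j' /eqP //|none]; case: cover => j'; rewrite none.
case: eqP => [<- //|/eqP ne].
rewrite -[E l]tauE mulmxA (prim_idem_orth symz_scheme BMCt (Et_prim _) (Et_prim _)).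
  by rewrite mul0mx.
by rewrite (inj_eq Et_inj) eq_sym.
Qed.

Lemma tau_E l : Et (tau l) *m E l = E l.
Proof. by rewrite Et_mul_E eqxx. Qed.

Lemma Et_sum j : Et j = \sum_(l | tau l == j) E l.
Proof.
rewrite -[Et j]mulmx1 -sum_E mulmx_sumr [RHS]big_mkcond /=.
by apply: eq_bigr => l _; rewrite Et_mul_E.
Qed.

Lemma At_E r l : At r *m E l = theta r (tau l) *: E l.
Proof. by rewrite -{1}tau_E mulmxA At_Et -scalemxAl tau_E. Qed.

Lemma tau_eq0 l : tau l = ord0 -> l = ord0.
Proof.
(* J = n E_0 kills E_l for l <> 0, but J = \sum_r At r acts on it by a positive
   integer when tau l = 0. *)
move=> tl0; apply/eqP/negPn/negP => l0.
have J_E0 : const_mx 1 = n%:R *: E ord0 :> 'M[algC]_n.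
  by rewrite E0_J scalerA divff ?scale1r // pnatr_eq0.
have : (const_mx 1 : 'M[algC]_n) *m E l = 0.
  rewrite J_E0 -scalemxAl (prim_idem_orth c_scheme BMC (E_prim _) (E_prim _)).
    by rewrite scaler0.
  by rewrite (inj_eq E_inj) eq_sym.
rewrite -(sum_rel_mx (symz c)) mulmx_suml (eq_bigr _ (fun r _ => At_E r l)) tl0.
rewrite -scaler_suml => /eqP; rewrite scaler_eq0 (negbTE (E_neq0 l)) orbF.
have th0 r : theta r ord0 = (if r == ord0 then 1 else k r)%:R by rewrite /theta; case: ifP.
by rewrite (eq_bigr _ (fun r _ => th0 r)) -natr_sum pnatr_eq0 (bigD1 ord0) //= eqxx.
Qed.

Lemma tau_surj j : exists l, tau l = j.
Proof.
case: (pickP (fun l => tau l == j)) => [l /eqP|none]; first by exists l.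
by move: (Et_neq0 j); rewrite Et_sum big_pred0 ?eqxx.
Qed.

Lemma tau0 : tau ord0 = ord0.
Proof. by have [l tl] := tau_surj ord0; rewrite -(tau_eq0 tl) tl. Qed.

Lemma tau_collision : exists p q, [/\ p != q, tau p = t3 & tau q = t3].
Proof.
have [p tp] := tau_surj t3; exists p.
case: (pickP (fun q => (tau q == t3) && (q != p))) => [q /andP [/eqP tq qp]|none].
  by exists q; rewrite eq_sym.
have p0 : p != ord0 by apply: contra_eqN tp => /eqP ->; rewrite tau0 eq_sym.
case/eqP: (Et3_split p0); rewrite Et_sum (big_pred1 p) // => l /=.
case: (eqVneq l p) => [->|lp]; first by rewrite tp !eqxx.
by move: (none l); rewrite lp andbT => ->.
Qed.

Let tau_inj_off (l1 l2 : 'I_5) : l1 != l2 -> tau l1 = tau l2 ->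
  {in predC1 l2 &, injective tau}.
Proof. by apply: injective_off_collision; rewrite ?card_ord //; exact: tau_surj. Qed.

Lemma tau_inj_off3 l l' : tau l != t3 -> tau l' = tau l -> l' = l.
Proof.
have [p [q [pq tp tq]]] := tau_collision.
move=> tl tl'; apply: (tau_inj_off pq (etrans tp (esym tq))) => //; rewrite !inE.
  by apply: contra_neq tl => l'q; rewrite -tl' l'q.
by apply: contra_neq tl => ->.
Qed.

Lemma tau_fibre3 l l' l'' : l != l' -> tau l = t3 -> tau l' = t3 -> tau l'' = t3 ->
  l'' = l \/ l'' = l'.
Proof.
move=> ll' tl tl' tl''; case: (eqVneq l'' l') => [|l''l']; [by right | left].
by apply: (tau_inj_off ll' (etrans tl (esym tl'))); rewrite ?inE // tl tl''.
Qed.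

Lemma E_off3 l : tau l != t3 -> E l = Et (tau l).
Proof.
move=> tl; rewrite Et_sum (big_pred1 l) // => l'.
by apply/eqP/eqP => [/tau_inj_off3 -> // | ->].
Qed.

Lemma Et_sym j : (Et j)^T = Et j.
Proof. by case: (Et_prim j) => BEt _ _ _; exact: in_BM_trmx_sym. Qed.

Lemma P_low (r : 'I_5) l : (r <= 2)%N -> P r l = theta (inord r) (tau l).
Proof.
by move=> r_le2; apply: idem_eigenvalue_eq (E_tr_neq0 l) _; rewrite -rel_mx_symz_low // At_E.
Qed.

Lemma P34_sum l : P o3 l + P o4 l = theta t3 (tau l).
Proof.
apply: (scaler_inj_vec (E_neq0 l)) => /=.
by rewrite scalerDl -!A_E -mulmxDl -rel_mx_symz3 At_E.
Qed.

Lemma P4_conj l : P o4 l = (P o3 l)^*.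
Proof.
rewrite -(trmx_rel_mx3 c_tr34) -rel_mx_trmxC.
exact: (prim_idem_eigenvalue_trmxC c_scheme BMC (E_prim l) (in_BM_rel c o3)).
Qed.

Lemma P34_off3 l : tau l != t3 -> P o4 l = P o3 l.
Proof.
move=> tl; apply: idem_eigenvalue_eq (E_tr_neq0 l) _; rewrite -(trmx_rel_mx3 c_tr34).
apply: trmx_eigen; [exact: A_E | by rewrite E_off3 // Et_sym |].
by rewrite trmx_rel_mx3 //; exact: BMC (in_BM_rel _ _) (E_BM l).
Qed.

Lemma P3_real_off3 l : tau l != t3 -> (P o3 l)^* = P o3 l.
Proof. by move=> tl; rewrite -P4_conj P34_off3. Qed.

Lemma P3_off3 l : tau l != t3 -> P o3 l *+ 2 = theta t3 (tau l).
Proof. by move=> tl; rewrite mulr2n -{2}(P34_off3 tl) P34_sum. Qed.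

Lemma P3_nonreal_outside q : exists2 l, l != q & (P o3 l)^* != P o3 l.
Proof.
(* Otherwise A_3 - A_4 = d E_q with d <> 0, and E_q would be skew-symmetric. *)
case: (pickP (fun l => (l != q) && ((P o3 l)^* != P o3 l))) => [l /andP [] | all_real].
  by exists l.
have A4T : (A o4)^T = A o3 by rewrite -(trmx_rel_mx3 c_tr34) trmxK.
have A34 : A o3 - A o4 != 0.
  have [x [y cxy]] := c_nonempty o3; apply/eqP => /matrixP /(_ x y) /eqP.
  by rewrite !mxE cxy eqxx -val_eqE /= !inordK // subr0 oner_eq0.
set d := P o3 q - (P o3 q)^*.
have DD : A o3 - A o4 = d *: E q.
  rewrite -[A o3 - A o4]mulmx1 -sum_E mulmx_sumr (bigD1 q) //= big1 ?addr0 => [|l lq].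
    by rewrite mulmxBl !A_E P4_conj scalerBl.
  move: (all_real l); rewrite lq /= => /negbFE /eqP real_l.
  by rewrite mulmxBl !A_E P4_conj real_l subrr.
have d0 : d != 0 by apply: contraNneq A34 => d0; rewrite DD d0 scale0r.
have EqT : (E q)^T = - E q.
  apply: (scalerI d0); rewrite -linearZ /= -DD scalerN -DD.
  by rewrite linearB /= (trmx_rel_mx3 c_tr34) A4T opprB.
by case/eqP: (E_neq0 q); apply: idem_trmxN_eq0 => //; case: (E_prim q).
Qed.

Lemma P3_nonreal l : tau l = t3 -> (P o3 l)^* != P o3 l.
Proof.
move=> tl; have [p [q [pq tp tq]]] := tau_collision.
have [l' l'l tl'] : exists2 l', l' != l & tau l' = t3.
  by case: (eqVneq l p) => [->|lp]; [exists q; rewrite // eq_sym | exists p; rewrite // eq_sym].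
have [l'' l''l' nonreal] := P3_nonreal_outside l'.
have tl'' : tau l'' = t3.
  by apply/eqP; apply: contraNT nonreal => /P3_real_off3 ->; rewrite eqxx.
by case: (tau_fibre3 l'l tl' tl tl'') => El''; [case/eqP: l''l' | rewrite -El''].
Qed.

Lemma P3_inj_on3 l l' : tau l = t3 -> tau l' = t3 -> P o3 l = P o3 l' -> l = l'.
Proof.
move=> tl tl' eq3; apply/E_inj/(prim_idem_eq_eigen c_scheme BMC (E_prim l) (E_prim l')).
move=> r; case: (leqP r 2) => [r_le2|r_gt2]; first by rewrite !P_low // tl tl'.
have : (r == o3) || (r == o4).
  by rewrite -!val_eqE /= !inordK //; have := ltn_ord r; lia.
by case/orP => /eqP ->; rewrite ?P4_conj eq3.
Qed.

Lemma theta_r0 r : r != ord0 -> theta r ord0 = (k r)%:R.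
Proof. by rewrite /theta => /negbTE ->; rewrite eqxx. Qed.

Lemma theta_rr r : r != ord0 -> theta r r = b r.
Proof. by rewrite /theta => /negbTE ->; rewrite eqxx. Qed.

Lemma theta_ra r j : r != ord0 -> j != ord0 -> j != r -> theta r j = a r.
Proof. by rewrite /theta => /negbTE -> /negbTE -> /negbTE ->. Qed.

Lemma theta_real r j : (theta r j)^* = theta r j.
Proof.
have trEt : \tr (Et j) != 0.
  by rewrite gt_eqF // (prim_idem_mxtrace_gt0 symz_scheme BMCt (Et_prim j)).
rewrite -(idem_eigenvalue_eq trEt (At_Et r j)).
apply: (prim_idem_eigenvalue_real symz_scheme BMCt (Et_prim j) (in_BM_rel _ r)).
by rewrite rel_mx_trmxC; apply: in_BM_trmx_sym => //; exact: in_BM_rel.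
Qed.

Lemma k_gt0 r : r != ord0 -> (0 < k r)%N.
Proof.
move=> r0; have [deg _ _ _ _] := Et_eigen r0.
have [x [y cxy]] := c_nonempty (inord r).
rewrite -(deg x) card_gt0; apply/set0Pn; exists y; rewrite inE /symz cxy.
have r_lt4 := ltn_ord r; rewrite inordK ?(ltn_eqF r_lt4) -?val_eqE /= ?inordK //; lia.
Qed.

Lemma theta_le r j : r != ord0 -> theta r j <= (k r)%:R.
Proof.
move=> r0; have [deg _ _ _ _] := Et_eigen r0.
have colsum y : #|[set x | symz c x y == r]| = k r.
  by rewrite -(deg y); apply: eq_card => x; rewrite !inE symz_sym.
have := norm_eigenvalue_le_valency colsum (Et_neq0 j) (At_Et r j).
by apply: le_trans; rewrite real_ler_norm // CrealE theta_real.
Qed.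

Lemma mxtrace_theta r : r != ord0 -> \sum_j theta r j * \tr (Et j) = 0.
Proof.
move=> r0; rewrite -(mxtrace_idem_decomp sum_Et (At_Et r)).
by apply: (mxtrace_rel_mx (r0 := ord0)) => // x; apply/eqP; rewrite symz_diag.
Qed.

Lemma mxtrace_theta_mul r s : r != s -> \sum_j theta r j * theta s j * \tr (Et j) = 0.
Proof.
move=> rs; have ME j : At r *m At s *m Et j = (theta r j * theta s j) *: Et j.
  by rewrite -mulmxA At_Et -scalemxAr At_Et scalerA mulrC.
by rewrite -(mxtrace_idem_decomp sum_Et ME) mxtrace_rel_mx_mul.
Qed.

Lemma valency_eigenvalue_exclusion r s : r != ord0 -> s != ord0 -> r != s ->
  a s = (k s)%:R -> a r != (k r)%:R /\ b r != (k r)%:R.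
Proof.
move=> r0 s0 rs as_k; have [_ _ _ _ ab_s] := Et_eigen s0.
have m_gt0 j : 0 < \tr (Et j) := prim_idem_mxtrace_gt0 symz_scheme BMCt (Et_prim j).
have ths j : j != s -> theta s j = (k s)%:R.
  by move=> js; case: (eqVneq j ord0) => [->|j0]; rewrite ?theta_r0 ?theta_ra.
have ar0 : a r = 0.
  have : \sum_j theta r j * (theta s j - (k s)%:R) * \tr (Et j) = 0.
    transitivity (\sum_j theta r j * theta s j * \tr (Et j)
                  - (k s)%:R * \sum_j theta r j * \tr (Et j)).
      by rewrite mulr_sumr -sumrB; apply: eq_bigr => j _; ring.
    by rewrite mxtrace_theta_mul // mxtrace_theta // mulr0 subrr.
  rewrite (bigD1 s) //= big1 ?addr0 => [|j js]; last by rewrite ths // subrr mulr0 mul0r.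
  rewrite (theta_ra r0 s0) 1?eq_sym // (theta_rr s0) => /eqP; rewrite !mulf_eq0 subr_eq0 -as_k.
  by rewrite [b s == _]eq_sym (negbTE ab_s) (gt_eqF (m_gt0 s)) !orbF => /eqP.
have kr_gt0 := k_gt0 r0.
split; first by rewrite ar0 eq_sym pnatr_eq0 -lt0n.
apply/eqP => br_k; move: (mxtrace_theta r0).
rewrite (bigD1 ord0) //= (bigD1 r) //= big1 => [|j /andP [j0 jr]]; last first.
  by rewrite theta_ra // ar0 mul0r.
rewrite theta_r0 // theta_rr // br_k addr0 -mulrDr => /eqP; rewrite mulf_eq0 pnatr_eq0.
by rewrite eqn0Ngt kr_gt0 /= (gt_eqF (addr_gt0 (m_gt0 _) (m_gt0 _))).
Qed.

Variable i : 'I_5.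
Hypothesis i12 : ((nat_of_ord i == 1) || (nat_of_ord i == 2))%N.
Local Notation i4 := (inord i : 'I_4).
Local Notation j4 := (inord (3 - i) : 'I_4).

Let i_val : (0 < i < 3)%N. Proof. by case/orP: i12 => /eqP ->. Qed.

Let labels_neq : [/\ i4 != ord0, i4 != t3, j4 != ord0, j4 != t3 & i4 != j4].
Proof. by rewrite -!val_eqE /= !inordK; try lia; split; apply/eqP; lia. Qed.

Let I4_cases (j : 'I_4) : [\/ j = ord0, j = i4, j = j4 | j = t3].
Proof.
have : ((j == ord0) || (j == i4)) || ((j == j4) || (j == t3)).
  rewrite -!val_eqE /= !inordK; try lia.
  by case/orP: i12 => /eqP ->; case: (nat_of_ord j) (ltn_ord j) => [|[|[|[|]]]].
by case/orP => /orP [] /eqP ->; [constructor 1 | constructor 2 | constructor 3 | constructor 4].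
Qed.

Let lam2 j := theta i4 j *+ 2 + theta t3 j.

Lemma lam2_0_neq j : j != ord0 -> j != t3 -> lam2 ord0 != lam2 j.
Proof.
have [i0 i3 _ _ _] := labels_neq.
move=> j0 j3; apply/eqP; rewrite /lam2 theta_r0 // theta_r0 // (theta_ra t3_neq0 j0 j3) => eq0j.
have le_ij : theta i4 j <= (k i4)%:R by exact: theta_le.
have le_a3 : a t3 <= (k t3)%:R by rewrite -(theta_ra t3_neq0 j0 j3) theta_le.
have : ((k i4)%:R - theta i4 j) *+ 2 + ((k t3)%:R - a t3) = 0.
  by rewrite mulrnBl addrACA -opprD eq0j subrr.
move/eqP; rewrite paddr_eq0 ?mulrn_wge0 ?subr_ge0 // mulrn_eq0 /= !subr_eq0.
case/andP => /eqP thk /eqP ak.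
have [/eqP ar /eqP br] := valency_eigenvalue_exclusion i0 t3_neq0 i3 (esym ak).
by case: (eqVneq j i4) thk => [->|ji]; rewrite ?theta_rr ?theta_ra // => /esym; [exact: br | exact: ar].
Qed.

Lemma lam2_inj_off3 j j' : j != t3 -> j' != t3 -> lam2 j = lam2 j' -> j = j'.
Proof.
have [i0 i3 j40 j43 ij] := labels_neq; have [_ _ _ _ ab] := Et_eigen i0.
have l0i := lam2_0_neq i0 i3; have l0j := lam2_0_neq j40 j43.
have lij : lam2 i4 != lam2 j4.
  rewrite /lam2 theta_rr // !theta_ra // 1?eq_sym //; apply/eqP => /addIr /eqP.
  by rewrite -subr_eq0 -mulrnBl mulrn_eq0 /= subr_eq0 (negbTE ab).
move=> j3 j'3; case: (I4_cases j) j3 => ->; rewrite ?eqxx // => _;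
  case: (I4_cases j') j'3 => ->; rewrite ?eqxx // => _ /eqP;
  by rewrite ?[lam2 i4 == lam2 ord0]eq_sym ?[lam2 j4 == lam2 _]eq_sym
    ?(negbTE l0i) ?(negbTE l0j) ?(negbTE lij).
Qed.

Definition lam l := P i l + P o3 l.

Let P_i l : P i l = theta i4 (tau l).
Proof. by rewrite P_low //; lia. Qed.

Lemma lam_off3 l : tau l != t3 -> lam l *+ 2 = lam2 (tau l).
Proof. by move=> tl; rewrite mulrnDl P3_off3 // P_i. Qed.

Lemma lam_real_off3 l : tau l != t3 -> (lam l)^* = lam l.
Proof. by move=> tl; rewrite /lam rmorphD /= P_i theta_real P3_real_off3. Qed.

Lemma lam_on3 l : tau l = t3 -> lam l = a i4 + P o3 l.
Proof. by have [i0 i3 _ _ _] := labels_neq; move=> tl; rewrite /lam P_i tl theta_ra // eq_sym. Qed.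

Lemma lam_inj : injective lam.
Proof.
have [i0 i3 _ _ _] := labels_neq.
have a_real : (a i4)^* = a i4 by rewrite -(theta_ra i0 t3_neq0) 1?eq_sym // theta_real.
have lam_neq l l' : tau l != t3 -> tau l' = t3 -> lam l != lam l'.
  move=> tl tl'; apply: contra_neq (P3_nonreal tl') => eq_lam.
  have -> : P o3 l' = lam l - a i4 by rewrite eq_lam lam_on3 // addrC addKr.
  by rewrite rmorphB /= lam_real_off3 // a_real.
move=> l l' eq_lam.
case: (eqVneq (tau l) t3) => tl; case: (eqVneq (tau l') t3) => tl'.
- by apply: P3_inj_on3 => //; apply: (addrI (a i4)); rewrite -!lam_on3.
- by case/eqP: (lam_neq _ _ tl' tl).
- by case/eqP: (lam_neq _ _ tl tl').
- by apply: (tau_inj_off3 tl'); apply: lam2_inj_off3 => //; rewrite -!lam_off3 // eq_lam.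
Qed.

Lemma eigenvalue_lam e :
  eigenvalue (adjmx (fun x y => (c x y == i) || (nat_of_ord (c x y) == 3)%N)) e <->
  exists l, e = lam l.
Proof.
have -> : adjmx (fun x y => (c x y == i) || (nat_of_ord (c x y) == 3)%N) = A i + A o3.
  apply/matrixP => x y; rewrite !mxE -[c x y == inord 3]val_eqE /= inordK //.
  have [->|_] := eqVneq (c x y) i; last by rewrite add0r.
  by rewrite (_ : (i == 3 :> nat) = false) ?addr0 //; lia.
apply: eigenvalue_idem_decomp => [||l|l]; [exact: sum_E | exact: E_neq0 | |].
  by rewrite mulmxDl !A_E -scalerDl.
by apply: BMC; [apply: in_BMD; exact: in_BM_rel | exact: E_BM].
Qed.

Lemma five_distinct_eigenvalues :
  exists s : seq algC, [/\ uniq s, size s = 5%N &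
    forall e, eigenvalue (adjmx (fun x y => (c x y == i) || (nat_of_ord (c x y) == 3)%N)) e
              <-> e \in s].
Proof.
exists [seq lam l | l <- enum 'I_5]; split.
- by rewrite map_inj_uniq ?enum_uniq //; exact: lam_inj.
- by rewrite size_map size_enum_ord.
- move=> e; rewrite eigenvalue_lam; split => [[l ->]|/mapP [l _ ->]]; last by exists l.
  by apply: map_f; rewrite mem_enum.
Qed.

End Proposition.

Local Close Scope sesquilinear_scope.
Unset Implicit Arguments.

Theorem proposition3p7 (n : nat) (c : 'I_n -> 'I_n -> 'I_5)
    (E : 'I_5 -> 'M[algC]_n) (Et : 'I_4 -> 'M[algC]_n) :
  (* commutative association scheme with relations R_0..R_4 *)
  is_assoc_scheme c -> is_commutative c ->
  (forall x y, (c x y == ord0) = (x == y)) ->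
  (forall i, exists x y, c x y = i) ->
  (* R_i^T = R_i for i <= 2, R_3^T = R_4 *)
  (forall x y, (nat_of_ord (c x y) <= 2)%N -> c y x = c x y) ->
  (forall x y, (nat_of_ord (c x y) == 3)%N = (nat_of_ord (c y x) == 4)%N) ->
  (* E_0..E_4 are the primitive idempotents, E_0 = J/|X| *)
  injective E -> (forall j, prim_idem c (E j)) ->
  (forall F, prim_idem c F -> exists j, F = E j) ->
  E ord0 = (n%:R)^-1 *: const_mx 1 ->
  (* symmetrization is amorphic, with primitive idempotents Et_0..Et_3 *)
  amorphic (symz c) ->
  injective Et -> (forall j, prim_idem (symz c) (Et j)) ->
  (forall F, prim_idem (symz c) F -> exists j, F = Et j) ->
  (* numbering of the Et_j *)
  (exists (k : 'I_4 -> nat) (a b : 'I_4 -> algC), forall i, i != ord0 ->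
     [/\ forall x, #|[set y | symz c x y == i]| = k i,
         rel_mx (symz c) i *m Et ord0 = (k i)%:R *: Et ord0,
         rel_mx (symz c) i *m Et i = b i *: Et i,
         forall j, j != ord0 -> j != i -> rel_mx (symz c) i *m Et j = a i *: Et j
       & a i != b i]) ->
  (* Et_3 is not among E_1..E_4 *)
  (forall j : 'I_5, j != ord0 -> Et (inord 3) != E j) ->
  forall i : 'I_5, ((nat_of_ord i == 1) || (nat_of_ord i == 2))%N ->
    exists s : seq algC, [/\ uniq s, size s = 5%N &
      forall e, eigenvalue (adjmx (fun x y => (c x y == i) || (nat_of_ord (c x y) == 3)%N)) e
                <-> e \in s].
Proof.
case: n c E Et => [|n'] c E Et c_scheme c_comm _ c_nonempty _ c_tr34 E_inj E_prim E_all E0_J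
  [symz_scheme symz_sym symz_diag _] Et_inj Et_prim Et_all [k [a [b Et_eigen]]] Et3_split i i12.
  by have [[[]]] := c_nonempty ord0.
exact: (five_distinct_eigenvalues c_scheme c_comm c_nonempty c_tr34 E_inj E_prim E_all E0_J
  symz_scheme symz_sym symz_diag Et_inj Et_prim Et_all Et_eigen Et3_split i12).
Qed.
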